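(* Let $K=10_{164}$, with Alexander polynomial $\Delta_K(t)=3-11t+17t^2-11t^3+3t^4$. There exists an epimorphism $\alpha\colon\pi_K\to D_3$ such that \[\Delta_K^{\varrho\circ\alpha}(t)\doteq\frac{(3-11t+17t^2-11t^3+3t^4)(3-13t^2+13t^4-3t^6)}{t-1},\] and consequently there is no polynomial $f(t)$ with integer coefficients such that $\Delta_K^{\varrho\circ\alpha}(t)\doteq\frac{\Delta_K(t)}{1-t}f(t)f(-t)$. (Explicitly, $\alpha$ may be taken to send the Wirtinger generators $a,\dots,k$ of the closure of the braid $\sigma_1\sigma_2^{-1}\sigma_3^2\sigma_2^{-1}\sigma_1\sigma_2^{-1}\sigma_3^{-1}\sigma_2^{-1}\sigma_1\sigma_2^{-1}$ — with relators $b^{-1}a^{-1}ea$, $a^{-1}cfc^{-1}$, $d^{-1}f^{-1}gf$, $f^{-1}g^{-1}hg$, $c^{-1}hih^{-1}$, $h^{-1}e^{-1}je$, $e^{-1}iki^{-1}$, $k^{-1}gdg^{-1}$, $i^{-1}gbg^{-1}$, $g^{-1}j^{-1}aj$ — to $a,c,f,k\mapsto xy^2$; $b,g,i\mapsto x$; $d,e,h,j\mapsto xy$.)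
   Context: $D_3=\langle x,y\mid x^2=y^3=1,\ xyx=y^{-1}\rangle$, acting on $\mathbb Z/3$ by $y\cdot n=n-1$, $x\cdot n=-n$; $\varrho\colon D_3\to\mathrm{GL}(3,\mathbb Z)$ is the associated permutation representation. $\pi_K=\pi_1(S^3\setminus\nu K)$. Twisted Alexander polynomial (Wada's invariant): let $\phi\colon\pi_K\to\mathbb Z$ send the oriented meridian to $1$; for $\alpha\colon\pi_K\to\mathrm{Aut}(V)$, $V$ a finitely generated free module over a UFD $R$ with quotient field $Q$, let $\alpha\otimes\phi$ act on $V\otimes_R R[t^{\pm1}]$ by $g\mapsto(v\otimes f\mapsto\alpha(g)v\otimes t^{\phi(g)}f)$. For a deficiency-one presentation $\langle g_1,\dots,g_{k+1}\mid r_1,\dots,r_k\rangle$ of $\pi_K$ with Fox matrix $M=(\partial r_i/\partial g_j)$ and $M_i$ obtained by deleting column $i$ with $\phi(g_i)\ne0$, set $\Delta_K^\alpha(t)=\det((\alpha\otimes\phi)(M_i))\det((\alpha\otimes\phi)(1-g_i))^{-1}\in Q(t)$; it is well defined up to multiplication by $\pm t^k$ here, and $\doteq$ denotes equality up to this indeterminacy. *)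

From HB Require Import structures.
From mathcomp Require Import all_boot all_order all_algebra all_fingroup.
From mathcomp Require Import fraction.
Set Implicit Arguments. Unset Strict Implicit. Unset Printing Implicit Defensive.
Import GRing.Theory.
Local Open Scope ring_scope.

(* The dihedral group D_3, realised (faithfully) through its action on *)
(* Z/3.  Elements are permutations of 'Z_3 (mathcomp product).  The    *)
(* LEFT action of g on n is  g . n := g^-1 n  (so that                 *)
(* (g*h) . n = g . (h . n)).                                           *)
Definition D3 := {perm 'Z_3}.
Definition D3act (g : D3) (n : 'Z_3) : 'Z_3 := (g^-1)%g n.

(* the generators: x . n = -n, y . n = n - 1 *)
Definition D3x : D3 := perm (inv_inj (@opprK 'Z_3)).
Definition D3y : D3 := perm (can_inj (@addrK 'Z_3 1)).

(* permutation representation rho : D_3 -> GL(3,Z):  rho(g) e_n = e_{g.n} *)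
Definition rho (g : D3) : 'M[int]_3 :=
  \matrix_(m < 3, n < 3) ((inZp m : 'Z_3) == D3act g (inZp n))%:R.

(* Finite presentations: words in the generators 'I_N                   *)
(* (a letter (g, false) is g, a letter (g, true) is g^-1).              *)
Definition word (N : nat) := seq ('I_N * bool).

Definition evalD (N : nat) (al : 'I_N -> D3) (w : word N) : D3 :=
  foldr (fun l acc => ((if l.2 then (al l.1)^-1 else al l.1) * acc)%g) 1%g w.

Definition Qt := {fraction {poly rat}}.
Definition tQ : Qt := tofrac ('X : {poly rat}).
Definition polyQ (f : {poly int}) : Qt := tofrac (map_poly (fun z : int => z%:~R) f).

(* (alpha (x) phi)(g) for a generator g, with values in GL(d, Q(t)) *)
Definition repgen (N d : nat) (A : 'I_N -> 'M[int]_d) (phi : 'I_N -> int)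
  (g : 'I_N) : 'M[Qt]_d :=
  (tQ ^ (phi g)) *: map_mx (fun z : int => z%:~R) (A g).

Definition repletter (N d : nat) (A : 'I_N -> 'M[int]_d) (phi : 'I_N -> int)
  (l : 'I_N * bool) : 'M[Qt]_d :=
  if l.2 then invmx (repgen A phi l.1) else repgen A phi l.1.

(* image under alpha (x) phi of the Fox derivative  d w / d g_j,
   using d(uv) = du + u dv,  d g_j/d g_j = 1,  d g_j^-1/d g_j = - g_j^-1 *)
Fixpoint foxmx (N d : nat) (A : 'I_N -> 'M[int]_d) (phi : 'I_N -> int)
  (w : word N) (j : 'I_N) : 'M[Qt]_d :=
  match w with
  | [::] => 0
  | l :: w' =>
      (if l.1 == j then (if l.2 then - repletter A phi l else 1) else 0)
      + repletter A phi l *m foxmx A phi w' j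
  end.

(* Wada's invariant for a deficiency-one presentation
   < g_0, ..., g_n | r_0, ..., r_(n-1) >, deleting the column of g_0
   (which must satisfy phi g_0 <> 0):
   det((alpha(x)phi)(M_0)) / det((alpha(x)phi)(1 - g_0)). *)
Definition wada (n d : nat) (rels : 'I_n -> word n.+1)
  (A : 'I_n.+1 -> 'M[int]_d) (phi : 'I_n.+1 -> int) : Qt :=
  \det (@mxblock Qt n n (fun _ => d) (fun _ => d)
          (fun (i j : 'I_n) => foxmx A phi (rels i) (lift ord0 j)))
  / \det (1 - repgen A phi ord0).

Definition eqdot (p q : Qt) : Prop :=
  exists (s : bool) (k : int), p = (-1) ^+ s * tQ ^ k * q.

(* The knot K = 10_164: Wirtinger presentation from the closure of     *)
(* sigma1 sigma2^-1 sigma3^2 sigma2^-1 sigma1 sigma2^-1 sigma3^-1      *)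
(* sigma2^-1 sigma1 sigma2^-1, generators a..k = 0..10.                 *)
Definition gen (k : nat) : 'I_11 := inord k.
Definition P (k : nat) : 'I_11 * bool := (gen k, false).
Definition M (k : nat) : 'I_11 * bool := (gen k, true).
Definition K_rels_seq : seq (word 11) :=
  [:: [:: M 1; M 0; P 4; P 0];
      [:: M 0; P 2; P 5; M 2];
      [:: M 3; M 5; P 6; P 5];
      [:: M 5; M 6; P 7; P 6];
      [:: M 2; P 7; P 8; M 7];
      [:: M 7; M 4; P 9; P 4];
      [:: M 4; P 8; P 10; M 8];
      [:: M 10; P 6; P 3; M 6];
      [:: M 8; P 6; P 1; M 6];
      [:: M 6; M 9; P 0; P 9] ].
Definition K_rels (i : 'I_10) : word 11 := nth [::] K_rels_seq i.

Definition K_phi (g : 'I_11) : int := 1.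

Definition DeltaK : {poly int} := Poly [:: 3; -11; 17; -11; 3].
Definition Fac2 : {poly int} := Poly [:: 3; 0; -13; 0; 13; 0; -3].

From Stdlib Require Import ZArith.
From HB Require Import structures.
From mathcomp Require Import all_boot all_order all_algebra all_fingroup fraction.
From mathcomp Require Import zify ring.
From mathcomp.zify Require Import ssrZ.
Set Implicit Arguments. Unset Strict Implicit. Unset Printing Implicit Defensive.
Import GRing.Theory.
Local Open Scope ring_scope.

(* Coefficient sequences [c_0; c_1; ...] over the binary integers Z,
   with the naive polynomial arithmetic; they are only ever evaluated. *)
Fixpoint cadd (p q : seq Z) : seq Z :=
  match p, q with
  | [::], _ => q
  | _, [::] => p
  | a :: p', b :: q' => Z.add a b :: cadd p' q'
  end.
Definition cscale (a : Z) (q : seq Z) : seq Z := map (Z.mul a) q.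
Fixpoint cmul (p q : seq Z) : seq Z :=
  if p is a :: p' then cadd (cscale a q) (Z0 :: cmul p' q) else [::].
Definition copp (q : seq Z) : seq Z := map Z.opp q.

(* A Laurent polynomial (e, c) stands for t^e * (c_0 + c_1 t + ...). *)
Definition laurent := (Z * seq Z)%type.
Definition lzero : laurent := (Z0, [::]).
Definition lone : laurent := (Z0, [:: Zpos 1]).
Definition ladd (p q : laurent) : laurent :=
  if Z.leb p.1 q.1 then (p.1, cadd p.2 (nseq (Z.to_nat (Z.sub q.1 p.1)) Z0 ++ q.2))
  else (q.1, cadd (nseq (Z.to_nat (Z.sub p.1 q.1)) Z0 ++ p.2) q.2).
Definition lmul (p q : laurent) : laurent := (Z.add p.1 q.1, cmul p.2 q.2).
Definition lopp (p : laurent) : laurent := (p.1, copp p.2).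
Definition lsum (s : seq laurent) : laurent := foldr ladd lzero s.
Definition lprod (s : seq laurent) : laurent := foldr lmul lone s.

Definition lis0 (p : laurent) : bool := all (Z.eqb Z0) p.2.
Definition leqb (p q : laurent) : bool := lis0 (ladd p (lopp q)).
Definition lnz (p : laurent) : bool := ~~ Z.eqb (last Z0 p.2) Z0.

Definition lmx := nat -> nat -> laurent.
Definition lmx_mul (n : nat) (f g : lmx) : lmx :=
  fun i j => lsum [seq lmul (f i k) (g k j) | k <- iota 0 n].
Definition lmx_add (f g : lmx) : lmx := fun i j => ladd (f i j) (g i j).
Definition lmx_opp (f : lmx) : lmx := fun i j => lopp (f i j).
Definition lmx_id : lmx := fun i j => if i == j then lone else lzero.
Definition lmx_zero : lmx := fun _ _ => lzero.
Definition lmx_eqb (n : nat) (f g : lmx) : bool :=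
  all (fun i => all (fun j => leqb (f i j) (g i j)) (iota 0 n)) (iota 0 n).
Definition lmx_lower (n : nat) (f : lmx) : bool :=
  all (fun i => all (fun j => (i < j)%N ==> lis0 (f i j)) (iota 0 n)) (iota 0 n).
Definition lmx_upper (n : nat) (f : lmx) : bool := lmx_lower n (fun i j => f j i).
Definition ldiag (n : nat) (f : lmx) : laurent := lprod [seq f i i | i <- iota 0 n].

(* Tabulating a matrix makes later lookups cheap under vm_compute. *)
Definition lmx_of (T : seq (seq laurent)) : lmx := fun i j => nth lzero (nth [::] T i) j.
Definition lmx_tab (n : nat) (f : lmx) : lmx :=
  lmx_of (mkseq (fun i => mkseq (f i) n) n).

(* An upper triangular matrix given by its rows from the diagonal on. *)
Definition lmx_of_upper (T : seq (seq laurent)) : lmx :=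
  fun i j => if (i <= j)%N then nth lzero (nth [::] T i) (j - i)%N else lzero.

(* A triangularisation certificate for m: matrices a, u such that a, u are
   upper triangular and b := a m u is lower triangular; it returns the
   product of the diagonal of b, i.e. det a * det m * det u. *)
Definition tri_cert (n : nat) (m a u : lmx) : option laurent :=
  let b := lmx_tab n (lmx_mul n (lmx_tab n (lmx_mul n a (lmx_tab n m))) u) in
  if [&& lmx_upper n a, lmx_upper n u & lmx_lower n b] then Some (ldiag n b)
  else None.

Section Evaluation.
Variables (F : fieldType) (x : F).
Hypothesis x_neq0 : x != 0.

Definition zcoef (z : Z) : F := (int_of_Z z)%:~R.

Lemma zcoefD a b : zcoef (Z.add a b) = zcoef a + zcoef b.
Proof. by rewrite /zcoef (_ : int_of_Z (Z.add a b) = int_of_Z a + int_of_Z b) ?intrD //; lia. Qed.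
Lemma zcoefM a b : zcoef (Z.mul a b) = zcoef a * zcoef b.
Proof. by rewrite /zcoef (_ : int_of_Z (Z.mul a b) = int_of_Z a * int_of_Z b) ?intrM //; nia. Qed.
Lemma zcoefN a : zcoef (Z.opp a) = - zcoef a.
Proof. by rewrite /zcoef (_ : int_of_Z (Z.opp a) = - int_of_Z a) ?mulrNz //; lia. Qed.
Lemma zcoef1 : zcoef (Zpos 1) = 1.
Proof. by rewrite /zcoef /= mulr1z. Qed.

Fixpoint peval (l : seq Z) : F := if l is a :: l' then zcoef a + x * peval l' else 0.

Lemma peval_add p q : peval (cadd p q) = peval p + peval q.
Proof.
elim: p q => [|a p IH] [|b q] /=; rewrite ?add0r ?addr0 //.
by rewrite IH zcoefD mulrDr addrACA.
Qed.

Lemma peval_scale a q : peval (cscale a q) = zcoef a * peval q.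
Proof. by elim: q => [|b q IH] /=; rewrite ?mulr0 // IH zcoefM mulrDr mulrCA. Qed.

Lemma peval_mul p q : peval (cmul p q) = peval p * peval q.
Proof.
elim: p => [|a p IH] /=; first by rewrite mul0r.
by rewrite peval_add peval_scale /= IH add0r mulrDl mulrA.
Qed.

Lemma peval_opp q : peval (copp q) = - peval q.
Proof. by elim: q => [|b q IH] /=; rewrite ?oppr0 // IH zcoefN opprD mulrN. Qed.

Lemma peval_shift k q : peval (nseq k Z0 ++ q) = x ^+ k * peval q.
Proof. by elim: k => [|k IH] /=; rewrite ?mul1r // add0r IH exprS mulrA. Qed.

Lemma peval_eq0 q : all (Z.eqb Z0) q -> peval q = 0.
Proof.
elim: q => [|b q IH] // /andP [/Z.eqb_eq b0 /IH q0].
by rewrite /= -b0 q0 mulr0 addr0.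
Qed.

Definition leval (p : laurent) : F := x ^ int_of_Z p.1 * peval p.2.

Lemma expZD (a b : Z) : x ^ int_of_Z (Z.add a b) = x ^ int_of_Z a * x ^ int_of_Z b.
Proof. by rewrite -expfzDr //; congr (_ ^ _); lia. Qed.

Lemma leval0 : leval lzero = 0. Proof. by rewrite /leval mulr0. Qed.
Lemma leval1 : leval lone = 1.
Proof. by rewrite /leval /= zcoef1 mulr0 addr0 mulr1. Qed.

Lemma leval_add p q : leval (ladd p q) = leval p + leval q.
Proof.
case: p q => [e1 l1] [e2 l2]; rewrite /ladd /leval /=.
case: Z.leb_spec => He /=; rewrite peval_add peval_shift mulrDr mulrA;
  rewrite -[x ^+ _]/(x ^ Posz _) -expfzDr //; congr (_ * _ + _ * _); congr (_ ^ _); lia.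
Qed.

Lemma leval_mul p q : leval (lmul p q) = leval p * leval q.
Proof. by rewrite /leval /= peval_mul expZD mulrACA. Qed.

Lemma leval_opp p : leval (lopp p) = - leval p.
Proof. by rewrite /leval /= peval_opp mulrN. Qed.

Lemma leval_eq0 p : lis0 p -> leval p = 0.
Proof. by move=> /peval_eq0; rewrite /leval => ->; rewrite mulr0. Qed.

Lemma leval_eq p q : leqb p q -> leval p = leval q.
Proof. by move/leval_eq0/eqP; rewrite leval_add leval_opp subr_eq0 => /eqP. Qed.

Lemma leval_sum s : leval (lsum s) = \sum_(p <- s) leval p.
Proof. by elim: s => [|p s IH]; rewrite ?big_nil ?leval0 // big_cons leval_add IH. Qed.

Lemma leval_prod s : leval (lprod s) = \prod_(p <- s) leval p.
Proof. by elim: s => [|p s IH]; rewrite ?big_nil ?leval1 // big_cons leval_mul IH. Qed.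

Definition lmx_eval (n : nat) (f : lmx) : 'M[F]_n := \matrix_(i, j) leval (f i j).

Lemma lmx_eval_mul n f g : lmx_eval n f *m lmx_eval n g = lmx_eval n (lmx_mul n f g).
Proof.
have iotaE : iota 0 n = index_iota 0 n by rewrite /index_iota subn0.
apply/matrixP => i j; rewrite !mxE leval_sum big_map iotaE big_mkord.
by apply: eq_bigr => k _; rewrite !mxE leval_mul.
Qed.

Lemma lmx_eval_add n f g : lmx_eval n (lmx_add f g) = lmx_eval n f + lmx_eval n g.
Proof. by apply/matrixP => i j; rewrite !mxE leval_add. Qed.
Lemma lmx_eval_opp n f : lmx_eval n (lmx_opp f) = - lmx_eval n f.
Proof. by apply/matrixP => i j; rewrite !mxE leval_opp. Qed.
Lemma lmx_eval_id n : lmx_eval n lmx_id = 1%:M.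
Proof.
apply/matrixP => i j; rewrite !mxE /lmx_id val_eqE.
by case: eqP => _; rewrite ?leval1 ?leval0.
Qed.
Lemma lmx_eval_zero n : lmx_eval n lmx_zero = 0.
Proof. by apply/matrixP => i j; rewrite !mxE leval0. Qed.

Lemma mem_iota_ord n (i : 'I_n) : (i : nat) \in iota 0 n.
Proof. by rewrite mem_iota ltn_ord. Qed.

Lemma lmx_eval_eq n f g : lmx_eqb n f g -> lmx_eval n f = lmx_eval n g.
Proof.
move=> /allP fg; apply/matrixP => i j; rewrite !mxE; apply: leval_eq.
by move/allP: (fg _ (mem_iota_ord i)); apply; apply: mem_iota_ord.
Qed.

Lemma lmx_eval_tab n f : lmx_eval n (lmx_tab n f) = lmx_eval n f.
Proof. by apply/matrixP => i j; rewrite !mxE /lmx_tab /lmx_of !nth_mkseq. Qed.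

Lemma det_lmx_lower n f : lmx_lower n f -> \det (lmx_eval n f) = leval (ldiag n f).
Proof.
move=> /allP low; rewrite det_trig; last first.
  apply/is_trig_mxP => i j lt_ij; rewrite mxE; apply: leval_eq0.
  by move/allP: (low _ (mem_iota_ord i)) => /(_ _ (mem_iota_ord j)); rewrite lt_ij.
have iotaE : iota 0 n = index_iota 0 n by rewrite /index_iota subn0.
rewrite leval_prod big_map iotaE big_mkord.
by apply: eq_bigr => i _; rewrite mxE.
Qed.

Lemma det_lmx_upper n f : lmx_upper n f -> \det (lmx_eval n f) = leval (ldiag n f).
Proof.
move=> /det_lmx_lower; rewrite -det_tr => <-; congr (\det _).
by apply/matrixP => i j; rewrite !mxE.
Qed.

Lemma tri_certP n m a u d : tri_cert n m a u = Some d ->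
  \det (lmx_eval n m) * (leval (ldiag n a) * leval (ldiag n u)) = leval d.
Proof.
rewrite /tri_cert; set b := lmx_tab n _.
case: ifP => // /and3P [up_a up_u low_b] [<-].
have amu : lmx_eval n a *m lmx_eval n m *m lmx_eval n u = lmx_eval n b.
  by rewrite /b !(lmx_eval_tab, =^~ lmx_eval_mul).
rewrite -(det_lmx_lower low_b) -amu !det_mulmx -(det_lmx_upper up_a) -(det_lmx_upper up_u).
by rewrite mulrCA mulrA.
Qed.

End Evaluation.

(* Following the paper, alpha sends each Wirtinger
   generator to a reflection x y^k of D_3; the exponents below are those of
   the paper composed with the inner automorphism g |-> y g y^-1, which
   replaces x y^k by x y^(k+1) and changes none of the assertions. *)
Definition expo : seq nat := [:: 0; 1; 0; 2; 2; 0; 1; 2; 1; 2; 0]%N.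
Definition alpha (g : 'I_11) : D3 := (D3x * D3y ^+ nth 0%N expo g)%g.

Lemma D3yX_apply k n : (D3y ^+ k)%g n = n + k%:R.
Proof.
elim: k n => [|k IH] n; first by rewrite expg0 perm1 addr0.
by rewrite expgSr permM IH permE /= -natr1 addrA.
Qed.

Lemma reflection_apply k n : (D3x * D3y ^+ k)%g n = k%:R - n.
Proof. by rewrite permM D3yX_apply permE addrC. Qed.

Lemma reflection_inv k : ((D3x * D3y ^+ k)^-1)%g = (D3x * D3y ^+ k)%g.
Proof.
apply/eqP; rewrite eq_invg_mul; apply/eqP/permP => n.
by rewrite permM perm1 !reflection_apply opprB addrC subrK.
Qed.

Lemma alpha_act g n : D3act (alpha g) n = (nth 0%N expo g)%:R - n.
Proof. by rewrite /D3act reflection_inv reflection_apply. Qed.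

(* The relators of K with generators as plain numbers (a = 0, ..., k = 10),
   a form on which vm_compute can run. *)
Definition wordN (w : word 11) : seq (nat * bool) := [seq (val l.1, l.2) | l <- w].
Definition K_words : seq (seq (nat * bool)) :=
  [:: [:: (1,true);(0,true);(4,false);(0,false)];
      [:: (0,true);(2,false);(5,false);(2,true)];
      [:: (3,true);(5,true);(6,false);(5,false)];
      [:: (5,true);(6,true);(7,false);(6,false)];
      [:: (2,true);(7,false);(8,false);(7,true)];
      [:: (7,true);(4,true);(9,false);(4,false)];
      [:: (4,true);(8,false);(10,false);(8,true)];
      [:: (10,true);(6,false);(3,false);(6,true)];
      [:: (8,true);(6,false);(1,false);(6,true)];
      [:: (6,true);(9,true);(0,false);(9,false)]]%N.

Lemma K_wordsE (r : 'I_10) : wordN (K_rels r) = nth [::] K_words r.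
Proof.
by case: r => [[|[|[|[|[|[|[|[|[|[|?]]]]]]]]]] ?] //=; rewrite /P /M /gen !inordK.
Qed.

(* Evaluating a word under alpha: each letter reflects, whatever its sign. *)
Definition word_action (w : seq (nat * bool)) (n : 'Z_3) : 'Z_3 :=
  foldl (fun m l => (nth 0%N expo l.1)%:R - m) n w.

Lemma evalD_alpha w n : evalD alpha w n = word_action (wordN w) n.
Proof.
elim: w n => [|l w IH] n /=; first by rewrite perm1.
by rewrite permM IH; case: l.2; rewrite ?reflection_inv reflection_apply.
Qed.

Lemma alpha_relations r : evalD alpha (K_rels r) = 1%g.
Proof.
have check : all (fun w => all (fun n => word_action w (inZp n) == inZp n) (iota 0 3))
                 K_words by vm_compute.
apply/permP => n; rewrite perm1 evalD_alpha K_wordsE -[n]valZpK.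
move/allP: check => /(_ _ (@mem_nth _ [::] K_words r (ltn_ord r))) /allP /(_ n).
by rewrite mem_iota ltn_ord => /(_ isT) /eqP.
Qed.

(* alpha is onto: the subgroup generated by its image contains the six
   distinct elements x, xy, xy^2, 1, y, y^2 *)
Lemma alpha_onto : <<[set alpha g | g : 'I_11]>>%g = [set: D3].
Proof.
set H := <<_>>%g.
have inH g : alpha g \in H by rewrite mem_gen ?imset_f.
have h0 := inH (gen 0); have h1 := inH (gen 1); have h3 := inH (gen 3).
pose L := [:: alpha (gen 0); alpha (gen 1); alpha (gen 3);
              alpha (gen 0) * alpha (gen 0); alpha (gen 0) * alpha (gen 1);
              alpha (gen 0) * alpha (gen 3)]%g.
have sLH : {subset L <= H}.
  apply/allP; rewrite /= h0 h1 h3.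
  by rewrite (groupM h0 h0) (groupM h0 h1) (groupM h0 h3).
have uL : uniq L.
  apply: (@map_uniq _ _ (fun p : D3 => (p 0, p 1))).
  by rewrite /= !permM !D3yX_apply !permE /gen !inordK.
apply/eqP; rewrite eqEcard subsetT cardsT card_Sn.
have -> : (3`! = #|L|)%N by rewrite (card_uniqP uL).
by apply/subset_leq_card/subsetP.
Qed.

Lemma tQ_neq0 : tQ != 0.
Proof. by rewrite /tQ tofrac_eq0 polyX_eq0. Qed.

(* A generator g goes to t rho(alpha g),
   where rho(x y^k) is the permutation matrix of n |-> k - n; its inverse is
   t^-1 rho(x y^k), since rho(x y^k) is an involution. *)
Definition tpow (inv : bool) : laurent := (if inv then Zneg 1 else Zpos 1, [:: Zpos 1]).
Definition letter_lmx (k : nat) (inv : bool) : lmx :=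
  fun i j => if (inZp i : 'Z_3) == k%:R - inZp j then tpow inv else lzero.

Notation rep_alpha := (fun g => rho (alpha g)).

Lemma repgen_letter g :
  repgen rep_alpha K_phi g = lmx_eval tQ 3 (letter_lmx (nth 0%N expo g) false).
Proof.
apply/matrixP => i j; rewrite /repgen /rho !mxE alpha_act /letter_lmx.
case: eqP => _; rewrite rmorph_nat /leval /=; first by rewrite zcoef1 mulr0 addr0.
by rewrite !mulr0.
Qed.

Lemma letter_inverse_check :
  all (fun k => lmx_eqb 3 (lmx_mul 3 (letter_lmx k false) (letter_lmx k true)) lmx_id) expo.
Proof. by vm_compute. Qed.

Lemma invmx_right (R : comUnitRingType) n (A B : 'M[R]_n) : A *m B = 1%:M -> invmx A = B.
Proof.
move=> AB; have [uA _] := mulmx1_unit AB.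
by rewrite -[invmx A]mulmx1 -AB mulmxA mulVmx ?mul1mx.
Qed.

Lemma repletter_letter l :
  repletter rep_alpha K_phi l = lmx_eval tQ 3 (letter_lmx (nth 0%N expo l.1) l.2).
Proof.
rewrite /repletter repgen_letter; case: l.2 => //; apply: invmx_right.
have -> : 1%:M = lmx_eval tQ 3 lmx_id by rewrite lmx_eval_id.
rewrite (lmx_eval_mul tQ_neq0); apply: (lmx_eval_eq tQ_neq0).
by move/allP: letter_inverse_check; apply; rewrite (@mem_nth _ 0%N expo) ?ltn_ord.
Qed.

Fixpoint fox_lmx (w : seq (nat * bool)) (j : nat) : lmx :=
  if w is l :: w' then
    let L := letter_lmx (nth 0%N expo l.1) l.2 in
    lmx_add (if l.1 == j then (if l.2 then lmx_opp L else lmx_id) else lmx_zero)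
            (lmx_mul 3 L (fox_lmx w' j))
  else lmx_zero.

Lemma foxmx_lmx w j : foxmx rep_alpha K_phi w j = lmx_eval tQ 3 (fox_lmx (wordN w) j).
Proof.
elim: w => [|[g b] w IH] /=; first by rewrite lmx_eval_zero.
rewrite (lmx_eval_add tQ_neq0) repletter_letter IH (lmx_eval_mul tQ_neq0) -val_eqE /=.
by case: (g == j :> nat); case: b; rewrite ?(lmx_eval_opp tQ_neq0) ?lmx_eval_id ?lmx_eval_zero.
Qed.

(* The 30x30 Fox matrix, block (r, j) being d r_r / d g_(j+1), and the
   3x3 matrix 1 - t rho(alpha a) of the deleted generator a. *)
Definition fox_block : lmx :=
  fun s t => fox_lmx (nth [::] K_words (s %/ 3)%N) (t %/ 3)%N.+1 (s %% 3)%N (t %% 3)%N.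
Definition den_lmx : lmx := lmx_add lmx_id (lmx_opp (letter_lmx 0 false)).

Lemma sum3 : (\sum_(i < 10) (fun _ : 'I_10 => 3%N) i = 30)%N.
Proof. by rewrite sum_nat_const card_ord. Qed.

Lemma block_index (s : 'I_(\sum_(i < 10) (fun _ : 'I_10 => 3%N) i)) :
  tagnat.sig1 s = (s %/ 3)%N :> nat /\ tagnat.sig2 s = (s %% 3)%N :> nat.
Proof.
have := tagnat.rect s.
rewrite (@big_ord_narrow _ _ _ (tagnat.sig1 s) 10 _ (ltnW (ltn_ord _))).
have -> : (\sum_(i < tagnat.sig1 s) 3 = tagnat.sig1 s * 3)%N.
  by rewrite sum_nat_const card_ord.
move=> ->.
have lt_s2 : (tagnat.sig2 s < 3)%N := ltn_ord _.
by rewrite divnMDl // divn_small // addn0 modnMDl modn_small.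
Qed.

Lemma det_castmx (R : comNzRingType) n m (e : n = m) (A : 'M[R]_n) :
  \det (castmx (e, e) A) = \det A.
Proof. by case: m / e; rewrite castmx_id. Qed.

Lemma wada_lmx : wada K_rels rep_alpha K_phi =
  \det (lmx_eval tQ 30 fox_block) / \det (lmx_eval tQ 3 den_lmx).
Proof.
rewrite /wada; have -> : @mxblock Qt 10 10 (fun _ => 3%N) (fun _ => 3%N)
            (fun i j => foxmx rep_alpha K_phi (K_rels i) (lift ord0 j))
          = castmx (esym sum3, esym sum3) (lmx_eval tQ 30 fox_block).
  apply/matrixP => s t; rewrite castmxE /mxblock !mxE foxmx_lmx K_wordsE mxE lift0.
  by have [-> ->] := block_index s; have [-> ->] := block_index t.
rewrite det_castmx repgen_letter /den_lmx (lmx_eval_add tQ_neq0) (lmx_eval_opp tQ_neq0).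
by rewrite lmx_eval_id.
Qed.

Lemma polyQD p q : polyQ (p + q) = polyQ p + polyQ q.
Proof. by rewrite /polyQ rmorphD tofracD. Qed.
Lemma polyQM p q : polyQ (p * q) = polyQ p * polyQ q.
Proof. by rewrite /polyQ rmorphM tofracM. Qed.
Lemma polyQ0 : polyQ 0 = 0.
Proof. by rewrite /polyQ map_poly0 tofrac0. Qed.
Lemma polyQX : polyQ 'X = tQ.
Proof. by rewrite /polyQ map_polyX. Qed.
Lemma polyQC c : polyQ c%:P = c%:~R.
Proof. by rewrite /polyQ map_polyC /= !rmorph_int. Qed.
Lemma polyQXn n : polyQ 'X^n = tQ ^+ n.
Proof. by elim: n => [|n IH]; rewrite ?polyQC // !exprS polyQM IH polyQX. Qed.
Lemma polyQ_inj : injective polyQ.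
Proof.
move=> p q /eqP; rewrite /polyQ tofrac_eq => /eqP.
by apply: map_inj_poly => //; exact: intr_inj.
Qed.

Lemma peval_polyQ l : peval tQ l = polyQ (Poly (map int_of_Z l)).
Proof.
elim: l => [|a l IH] /=; first by rewrite polyQ0.
by rewrite cons_poly_def polyQD polyQM polyQX polyQC -IH addrC mulrC.
Qed.

Definition lpoly (s : seq int) : laurent := (Z0, map Z_of_int s).

Lemma leval_lpoly s : leval tQ (lpoly s) = polyQ (Poly s).
Proof. by rewrite /leval /= expr0z mul1r peval_polyQ -map_comp (eq_map Z_of_intK) map_id. Qed.

Lemma lnz_neq0 p : lnz p -> leval tQ p != 0.
Proof.
move=> top; apply: mulf_neq0; first exact: expfz_neq0 tQ_neq0.
rewrite peval_polyQ.
set s := map int_of_Z p.2.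
have last_s : last 0 s != 0.
  rewrite -[0]/(int_of_Z Z0) last_map.
  apply: contraNneq top => /(congr1 Z_of_int).
  by rewrite int_of_ZK => ->.
have : Poly s != 0 by rewrite -size_poly_eq0 (PolyK last_s); case: (s) last_s.
apply: contra_neq => sQ0; apply: polyQ_inj.
by rewrite sQ0 polyQ0.
Qed.

(* The certificates, found by computer algebra.  The row operations add
   row j to row i for the listed pairs (i, j). *)
Definition fox_rowops : lmx :=
  lmx_add lmx_id (fun i j =>
    if (i, j) \in [:: (0, 1); (6, 8); (9, 15); (10, 16); (11, 17); (15, 16)]%N
    then lone else lzero).

Section CertificateData.
Local Open Scope Z_scope.
(* column operations triangularising (row operations) x (Fox matrix) *)
Definition fox_colops : seq (seq laurent) :=
  [:: [:: (0, [:: 1]); (0, [:: -1]); lzero; lzero; lzero; lzero; lzero; lzero; lzero;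
       (-7, [:: -1; 1; 1; -1]); lzero; (-10, [:: -1; 2; 0; -2; 1]);
       (-12, [:: -1; 2; 0; -2; 1]); (-11, [:: -1; 1; 1; -1]); (-10, [:: 1; -1]);
       (-12, [:: -1; 1]); (-14, [:: 2; -4; 2]); (-16, [:: -1; 2; 0; -2; 1]);
       (-17, [:: -1; 2; 0; -2; 1]); lzero; (-18, [:: -1; 1; 1; -1]); (-19, [:: 1; -1; -1; 1]);
       (-22, [:: 1; -3; 1; 3; -2]); (-24, [:: -1; 3; -1; -3; 2]);
       (-28, [:: 1; -2; -5; 10; 4; -12; 2; 3; -1]); (-29, [:: 1; 1; -5; -1; 8; -5; -4; 6; -2]);
       (-30, [:: -1; 1; 6; -2; -8; 8; 2; -4; -1; 1]);
       (-30, [:: 3; -9; -10; 18; 3; -26; 15; 10; -8; -1; 1]);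
       (-31, [:: -3; -6; 16; 2; -20; -6; 26; 8; -25; 4; 6; -2]);
       (-32, [:: -9; 24; 3; -53; 12; 69; -10; -81; 53; 9; -17; 4])];
     [:: (0, [:: 1]); lzero; lzero; lzero; lzero; lzero; lzero; lzero; lzero; lzero;
       (-11, [:: -1; 2; 0; -2; 1]); (-11, [:: -1; 2; 0; -2; 1]); (-12, [:: -1; 1; 1; -1]);
       (-11, [:: 1; -1]); (-13, [:: -1; 1]); (-15, [:: 1; -2; 2; -2; 1]);
       (-17, [:: -1; 2; 0; -2; 1]); (-18, [:: -1; 2; 0; -2; 1]); lzero; lzero;
       (-18, [:: -1; 1; 1; -1]); (-21, [:: -1; 3; -1; -3; 2]);
       (-25, [:: -1; 2; 4; -9; -2; 9; -1; -2]); (-27, [:: 1; -2; -3; 6; 1; -4; 0; 1]);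
       (-28, [:: 1; 1; -4; 0; 7; -4; -2; 2]);
       (-30, [:: -1; -1; 5; -1; -14; 11; 4; -9; 3; 2; -1]);
       (-30, [:: 3; -3; -1; 10; 6; -21; 10; 9; -13; 2; 3; -1]);
       (-31, [:: 3; -12; 14; 4; -14; 12; -6; -4; 3]); (-29, [:: 3; 9; -34; 21; -4; 1; 2; -3; 1])];
     [:: (0, [:: 1]); lzero; lzero; lzero; lzero; lzero; lzero; lzero; (-9, [:: 1; -1; -1; 1]);
       lzero; lzero; lzero; (-12, [:: -1; 0; 1]); (-12, [:: 1; 0; -1]);
       (-14, [:: -1; 1; 1; -1]); lzero; lzero; (-18, [:: -1; 1; 1; -1]); lzero; lzero;
       (-20, [:: 1; -2; 0; 2; -1]); (-24, [:: 1; -1; -4; 5; 3; -5; 0; 1]);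
       (-24, [:: -3; 4; 1; -2]); (-29, [:: 1; -1; -5; 12; -3; -10; 8; -2]);
       (-30, [:: -1; 3; -1; -7; 10; -7; 0; 7; -3; -2; 1]);
       (-30, [:: 3; -3; -7; 19; -13; -3; 5; -1]);
       (-29, [:: -18; 42; -12; -44; 42; -2; -12; 4]);
       (-31, [:: -9; 33; -27; -35; 79; -67; 31; 1; -12; 8; -2])];
     [:: (0, [:: 1]); lzero; lzero; lzero; lzero; lzero; lzero; lzero; lzero;
       (-11, [:: -1; 1; 2; -2; -1; 1]); lzero; lzero; lzero; lzero; lzero;
       (-18, [:: 1; -3; 1; 5; -5; -1; 3; -1]); lzero; (-17, [:: -1; 2; 0; -2; 1]);
       (-18, [:: 2; -4; 0; 4; -2]); (-21, [:: 2; -8; 8; 4; -10; 4]);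
       (-25, [:: 1; -3; -4; 19; -9; -17; 14; 1; -2]); (-24, [:: 2; -7; 1; 9; -4; -2; 1]);
       (-26, [:: 1; 2; -5; -1; 7; -2; -4; 2]); (-27, [:: -2; 1; 8; -6; -7; 6; 1; -1]);
       (-25, [:: -6; 9; 5; -12; 2; 3; -1]); (-30, [:: -3; 9; -11; -15; 37; 1; -29; 7; 6; -2]);
       (-31, [:: -3; 12; -23; 20; 17; -47; 18; 16; -10; -1; 1])];
     [:: (-1, [:: 1; -1]); (-2, [:: -1; 1]); lzero; lzero; lzero; lzero; lzero; lzero; lzero;
       (-10, [:: -1; 1; 1; -1]); (-11, [:: -1; 1; 1; -1]); lzero; lzero; lzero; lzero;
       (-18, [:: 1; -2; 0; 2; -1]); (-17, [:: -1; 1; 1; -1]); (-18, [:: 1; -1; 0; 0; -1; 1]);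
       (-21, [:: 1; -4; 5; -1; -4; 5; -2]); (-24, [:: -1; 2; 5; -14; 4; 13; -10; -1; 2]);
       (-25, [:: 1; 0; -7; 3; 6; -2; -1]); (-26, [:: 1; 2; -2; 0; 2; -2]);
       (-27, [:: -2; -1; 7; 1; -12; 3; 9; -4; -2; 1]);
       (-28, [:: 6; -3; -14; 13; 7; -13; 2; 3; -1]); (-30, [:: 3; -6; -7; 14; 5; -10; -1; 2]);
       (-31, [:: 6; -30; 40; 25; -89; 31; 46; -33; -1; 7; -2])];
     [:: (-1, [:: -1; 1]); lzero; lzero; lzero; lzero; lzero; lzero; lzero;
       (-11, [:: -1; 1; 1; -1]); lzero; lzero; lzero; lzero; lzero;
       (-17, [:: -1; 2; 0; -2; 1]); (-18, [:: 1; -1; -1; 1]); (-19, [:: -1; 1; 1; -1]);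
       (-22, [:: -1; 3; -1; -2; -1; 2; 2; -3; 1]); (-22, [:: 1; -4; 6; 0; -8; 5; 1; -1]);
       (-25, [:: 1; -3; 0; 3; -1; -1; 1]); (-26, [:: 2; 0; -8; 9; 2; -6; 2]);
       (-27, [:: -2; 3; 5; -5; -5; 3; 2; -1]); (-26, [:: -6; 3; 8; -4; -2; 1]);
       (-29, [:: -3; 6; -5; -8; 23; -4; -19; 8; 4; -2]);
       (-31, [:: -3; 12; -14; -13; 56; -36; -38; 49; -5; -12; 4])];
     [:: (-3, [:: -1; 1; 1; -1]); lzero; (-5, [:: 1; -1; -1; 1]); lzero; lzero; lzero;
       (-13, [:: -1; 2; 1; -4; 1; 2; -1]); (-12, [:: 1; -1; -2; 2; 1; -1]);
       (-11, [:: -1; 1; 1; -1]); (-13, [:: 1; -1; -1; 1]); (-15, [:: -1; 2; 0; -2; 1]);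
       (-17, [:: 1; -2; 0; 2; -1]); (-20, [:: 1; -3; 2; 4; -8; 3; 4; -4; 1]);
       (-18, [:: 1; -2; 0; 2; -1]); (-19, [:: -1; 3; -3; -1; 4; -2]);
       (-20, [:: 2; -5; 4; 2; -5; 2; -1; 1]); (-23, [:: 2; -9; 14; -7; -6; 11; -8; 5; -2]);
       (-27, [:: 1; -3; -3; 18; -17; -1; 8; -8; 12; -8; -1; 2]);
       (-26, [:: -1; -1; 8; -3; -10; 8; 1; -2]); (-28, [:: 1; -1; -7; 8; 2; -7; 0; 4; -2]);
       (-29, [:: -1; 5; 2; -15; 9; 17; -21; 0; 11; -4; -2; 1]);
       (-29, [:: -3; 0; 1; -3; 0; -5; 9; -1; -3; 1]);
       (-32, [:: -3; 9; -14; -9; 50; -43; -24; 57; -15; -14; 6]);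
       (-33, [:: -3; 12; -26; 38; -21; -38; 79; -49; 10; 4; -5; 5; -2])];
     [:: (-4, [:: 1; -1; -1; 1]); lzero; lzero; lzero; lzero; lzero; lzero;
       (-13, [:: -1; 2; 0; -2; 1]); lzero; lzero; (-16, [:: 1; -2; 0; 2; -1]);
       (-18, [:: 1; -2; 0; 2; -1]); (-20, [:: 1; -2; 1; -1; 1; 2; -3; 1]);
       (-19, [:: -1; 2; 0; -2; 1]); (-20, [:: 1; -2; 1; 1; -2; 1]);
       (-23, [:: 1; -5; 8; -3; -3; 2; -2; 5; -4; 1]);
       (-26, [:: -1; 3; 2; -14; 12; 1; -4; 7; -11; 4; 2; -1]);
       (-26, [:: 2; -6; 4; 1; 0; 0; -2; 1]); (-26, [:: 1; 5; -11; 1; 10; -8; 2]);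
       (-29, [:: -1; 1; 0; -5; 7; 0; -1; -2; 1]);
       (-30, [:: 6; -6; -8; 17; -1; -26; 22; 1; -7; 2]);
       (-32, [:: 3; -6; -7; 23; -13; -1; -7; 1; 28; -25; -2; 8; -2]);
       (-33, [:: 6; -30; 46; 1; -55; 12; 22; 57; -105; 40; 22; -20; 4])];
     [:: (-5, [:: -1; 1; 1; -1]); lzero; lzero; lzero; (-12, [:: 1; -2; -1; 4; -1; -2; 1]);
       (-13, [:: -1; 1; 2; -2; -1; 1]); (-12, [:: 1; -1; -1; 1]); lzero;
       (-14, [:: -1; 1; 1; -1]); lzero; (-18, [:: 1; -3; 1; 5; -5; -1; 3; -1]);
       (-19, [:: -1; 3; -1; -3; 2]); (-20, [:: 1; -1; 0; -1; 1; 1; -2; 1]);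
       (-21, [:: -1; 1; 0; 2; -4; 0; 5; -3]); (-24, [:: -1; 3; -2; 3; -12; 11; 8; -17; 7]);
       (-25, [:: 1; -3; -9; 34; -16; -33; 29; 2; -5]);
       (-27, [:: 1; -4; 3; 8; -12; -4; 12; -3; -2; 1]);
       (-28, [:: 1; -2; -3; 13; -9; -5; 11; -2; -4; 2]);
       (-29, [:: -1; 3; -1; -7; 2; 9; -8; -4; 5; 1; -1]);
       (-29, [:: -3; 0; 19; -12; -12; 19; 2; -14; 3; 3; -1]);
       (-31, [:: -3; 9; -2; -9; -2; 17; 4; -23; 5; 6; -2]);
       (-33, [:: -3; 12; -8; -19; 15; 38; -13; -80; 57; 14; -21; 3; 1])];
     [:: (-6, [:: -1; 1; 1; -1]); lzero; (-9, [:: -1; 2; 0; -2; 1]);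
       (-11, [:: -1; 2; 0; -2; 1]); (-10, [:: -1; 1; 1; -1]); (-9, [:: 1; -1]);
       (-11, [:: -1; 1]); (-13, [:: 2; -4; 2]); (-15, [:: -1; 2; 0; -2; 1]);
       (-16, [:: -1; 2; 0; -2; 1]); lzero; (-17, [:: -1; 1; 1; -1]); (-18, [:: 1; -1; -1; 1]);
       (-21, [:: 1; -3; 1; 3; -2]); (-23, [:: -1; 3; -1; -3; 2]);
       (-27, [:: 1; -2; -5; 10; 4; -12; 2; 3; -1]); (-28, [:: 1; 1; -5; -1; 8; -5; -4; 6; -2]);
       (-29, [:: -1; 1; 6; -2; -8; 8; 2; -4; -1; 1]);
       (-29, [:: 3; -9; -10; 18; 3; -26; 15; 10; -8; -1; 1]);
       (-30, [:: -3; -6; 16; 2; -20; -6; 26; 8; -25; 4; 6; -2]);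
       (-31, [:: -9; 24; 3; -53; 12; 69; -10; -81; 53; 9; -17; 4])];
     [:: (-8, [:: 1; -1; -1; 1]); lzero; lzero; lzero; (-11, [:: -1; 0; 1]);
       (-11, [:: 1; 0; -1]); (-13, [:: -1; 1; 1; -1]); lzero; lzero; (-17, [:: -1; 1; 1; -1]);
       lzero; lzero; (-19, [:: 1; -2; 0; 2; -1]); (-23, [:: 1; -1; -4; 5; 3; -5; 0; 1]);
       (-23, [:: -3; 4; 1; -2]); (-28, [:: 1; -1; -5; 12; -3; -10; 8; -2]);
       (-29, [:: -1; 3; -1; -7; 10; -7; 0; 7; -3; -2; 1]);
       (-29, [:: 3; -3; -7; 19; -13; -3; 5; -1]);
       (-28, [:: -18; 42; -12; -44; 42; -2; -12; 4]);
       (-30, [:: -9; 33; -27; -35; 79; -67; 31; 1; -12; 8; -2])];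
     [:: (-10, [:: -1; 2; 0; -2; 1]); (-10, [:: -1; 2; 0; -2; 1]); (-11, [:: -1; 1; 1; -1]);
       (-10, [:: 1; -1]); (-12, [:: -1; 1]); (-14, [:: 1; -2; 2; -2; 1]);
       (-16, [:: -1; 2; 0; -2; 1]); (-17, [:: -1; 2; 0; -2; 1]); lzero; lzero;
       (-17, [:: -1; 1; 1; -1]); (-20, [:: -1; 3; -1; -3; 2]);
       (-24, [:: -1; 2; 4; -9; -2; 9; -1; -2]); (-26, [:: 1; -2; -3; 6; 1; -4; 0; 1]);
       (-27, [:: 1; 1; -4; 0; 7; -4; -2; 2]);
       (-29, [:: -1; -1; 5; -1; -14; 11; 4; -9; 3; 2; -1]);
       (-29, [:: 3; -3; -1; 10; 6; -21; 10; 9; -13; 2; 3; -1]);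
       (-30, [:: 3; -12; 14; 4; -14; 12; -6; -4; 3]); (-28, [:: 3; 9; -34; 21; -4; 1; 2; -3; 1])];
     [:: (-12, [:: 1; -2; -1; 4; -1; -2; 1]); lzero; lzero; lzero; lzero; lzero;
       (-19, [:: -1; 4; -4; -4; 10; -4; -4; 4; -1]); lzero; (-18, [:: 1; -3; 2; 2; -3; 1]);
       (-19, [:: -2; 6; -4; -4; 6; -2]); (-22, [:: -2; 10; -16; 4; 14; -14; 4]);
       (-26, [:: -1; 4; 1; -23; 28; 8; -31; 13; 3; -2]);
       (-25, [:: -2; 9; -8; -8; 13; -2; -3; 1]); (-27, [:: -1; -1; 7; -4; -8; 9; 2; -6; 2]);
       (-28, [:: 2; -3; -7; 14; 1; -13; 5; 2; -1]); (-26, [:: 6; -15; 4; 17; -14; -1; 4; -1]);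
       (-31, [:: 3; -12; 20; 4; -52; 36; 30; -36; 1; 8; -2]);
       (-32, [:: 3; -15; 35; -43; 3; 64; -65; 2; 26; -9; -2; 1])];
     [:: (-12, [:: 1; -1; -2; 2; 1; -1]); (-11, [:: -1; 1; 1; -1]); lzero; lzero; lzero; lzero;
       (-18, [:: 2; -4; 0; 4; -2]); (-19, [:: -1; 1; 0; 0; 1; -1]);
       (-20, [:: 1; -1; 0; 0; 0; 0; -1; 1]); (-23, [:: 1; -3; 2; -2; 6; -3; -6; 8; -3]);
       (-24, [:: -1; 1; 9; -20; 4; 21; -15; -2; 3]); (-26, [:: -1; 4; 0; -10; 4; 7; -3; -1]);
       (-27, [:: -2; 1; 10; -11; -2; 8; -4]);
       (-28, [:: 2; -5; -6; 12; 6; -15; 1; 10; -4; -2; 1]);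
       (-28, [:: 6; 3; -17; 5; 11; -11; 1; 3; -1]);
       (-30, [:: 6; -12; -2; 22; -18; -6; 18; -6; -4; 2]);
       (-32, [:: 3; -6; -16; 53; -31; -53; 69; -3; -28; 11; 3; -2])];
     [:: (-12, [:: 1; -1; -1; 1]); lzero; lzero; lzero; lzero;
       (-19, [:: -1; 2; -1; 0; 1; -2; 1]); (-18, [:: 2; -2; -2; 2]);
       (-19, [:: -2; 2; 1; -1; 1; -1]); (-22, [:: -2; 7; -6; -1; 3; -3; 4; -3; 1]);
       (-25, [:: 1; -2; -5; 15; -8; -7; 10; -7; 3; 1; -1]);
       (-26, [:: -1; 1; 4; -3; -3; 1; 0; 1]); (-27, [:: -1; 0; 2; -8; 7; 4; -6; 2]);
       (-28, [:: 2; -1; -4; 4; 7; -8; -6; 6; 1; -1]);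
       (-29, [:: -6; 3; 14; -19; -4; 21; -6; -5; 2]);
       (-31, [:: -3; 6; 4; -8; -10; 2; 24; -6; -19; 8; 4; -2]);
       (-32, [:: -6; 27; -28; -39; 76; 25; -82; -5; 50; -12; -10; 4])];
     [:: (-12, [:: 1; -1; -1; 1]); (-14, [:: -1; 2; 0; -2; 1]); (-16, [:: 1; -2; 0; 2; -1]);
       (-18, [:: 1; -2; 0; 2; -1]); (-17, [:: -1; 2; 0; -2; 1]); (-18, [:: 1; -1; -1; 1]);
       (-19, [:: -1; 2; 0; -2; 1]); (-22, [:: -1; 4; -4; -1; 2; 0; 2; -3; 1]);
       (-25, [:: 1; -2; -4; 10; -2; -3; 1; -6; 5; 1; -1]); (-25, [:: -2; 4; 0; -1; -1; -1; 1]);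
       (-25, [:: -1; -6; 5; 4; -6; 2]); (-28, [:: 1; 0; 0; 5; -2; -2; -1; 1]);
       (-28, [:: -3; -6; 4; -1; -1; 1; 6; -3; -2; 1]);
       (-30, [:: -3; 0; 7; 0; -29; 24; 27; -32; 0; 8; -2]);
       (-31, [:: -6; 15; 11; -71; 57; 67; -116; 39; 23; -18; 3])];
     [:: (-13, [:: -1; 1; 1; -1]); lzero; (-18, [:: 1; -3; 1; 5; -5; -1; 3; -1]);
       (-18, [:: 1; -1; -1; 1]); (-17, [:: -1; 2; 0; -2; 1]); (-18, [:: 2; -4; 0; 4; -2]);
       (-21, [:: 2; -9; 10; 4; -12; 5]); (-25, [:: 1; -4; -3; 23; -14; -20; 19; 1; -3]);
       (-24, [:: 5; -11; 0; 11; -4; -2; 1]); (-27, [:: -1; 0; 8; -5; -7; 11; -2; -4; 2]);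
       (-28, [:: 1; -4; -4; 12; -6; -7; 6; 1; -1]);
       (-28, [:: 3; 3; 2; -13; 14; 4; -14; 3; 3; -1]); (-29, [:: 9; -24; 9; 32; -25; -8; 7]);
       (-31, [:: 3; -9; -1; 27; -18; -8; -18; 27; -1; -9; 3])];
     [:: (-15, [:: 1; -2; 0; 2; -1]); (-17, [:: 1; -2; 0; 2; -1]); (-18, [:: 1; -2; 0; 2; -1]);
       (-18, [:: 1; -2; 0; 2; -1]); (-19, [:: -1; 2; 0; -1; 0; -1; 1]);
       (-22, [:: -1; 4; -5; 2; 1; -4; 5; -2]); (-23, [:: -1; 6; -11; 2; 13; -10; -1; 2]);
       (-26, [:: -1; 4; -3; -3; 1; 4; -1; -1]); (-27, [:: -1; 1; 3; -5; 4; -2]);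
       (-28, [:: 1; -2; -3; 3; 10; -15; 1; 10; -4; -2; 1]);
       (-28, [:: 3; 3; -16; 14; -1; -5; 2]);
       (-30, [:: 3; -9; 11; -15; 11; 15; -29; 15; 2; -6; 2]);
       (-31, [:: 3; -9; -10; 60; -39; -85; 134; -50; -22; 24; -6])];
     [:: (-18, [:: 1; -2; -1; 4; -1; -2; 1]); lzero; (-17, [:: -1; 1; 1; -1]);
       (-18, [:: 2; -2; -2; 2]); (-21, [:: 2; -6; 2; 6; -4]);
       (-25, [:: 1; -2; -5; 12; 1; -12; 3; 2]); (-25, [:: -2; 4; 3; -8; 2; 2; -1]);
       (-26, [:: -1; -1; 1; -1; -2; 4; -2]); (-28, [:: 1; 1; -3; 2; 7; -6; -1; 1]);
       (-28, [:: -3; -3; 4; -2; -10; 13; 0; -4; 1]);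
       (-30, [:: -3; 3; 4; -13; 8; -5; 6; 15; -21; 2; 6; -2]);
       (-31, [:: -3; 6; 4; -8; -34; 53; 38; -98; 45; 15; -18; 4])];
     [:: (-18, [:: 1; -2; 0; 2; -1]); lzero; lzero; (-20, [:: -1; 3; -2; -2; 3; -1]);
       (-24, [:: -1; 2; 3; -9; 2; 8; -5; -1; 1]); (-24, [:: 3; -7; 3; 3; -2]);
       (-27, [:: -1; 0; 7; -6; -6; 10; -4]); (-28, [:: 1; -3; -3; 9; -4]);
       (-28, [:: 3; 0; -1; -9; 12; -6; -1; 3; -1]);
       (-30, [:: 3; -3; -13; 37; -29; -21; 47; -21; -6; 8; -2]);
       (-31, [:: 6; -27; 43; -15; -42; 74; -75; 47; -2; -17; 10; -2])];
     [:: (-18, [:: 1; -1; -1; 1]); (-19, [:: -1; 1; 0; 0; 1; -1]);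
       (-22, [:: -1; 3; -2; 0; 1; -3; 2]); (-23, [:: -1; 5; -6; -4; 9; -1; -2]);
       (-26, [:: -1; 3; 0; -3; -2; 2; 1]); (-27, [:: -1; 0; 3; -2; 2]);
       (-28, [:: 1; -1; -4; -1; 9; -6; -5; 5; 1; -1]);
       (-28, [:: -3; 9; 4; -9; -4; 17; -5; -11; 5; 2; -1]);
       (-28, [:: 15; -30; 1; 46; -29; -18; 15; 2; -2]);
       (-31, [:: -3; 24; -53; 10; 108; -117; -15; 61; -11; -11; 2; 1])];
     [:: (-18, [:: 1; -1; -1; 1]); (-21, [:: 1; -3; 1; 3; -2]); (-23, [:: -2; 5; 1; -7; 1; 2]);
       (-27, [:: 1; -2; -3; 6; -2; 0; 1; -1]); (-28, [:: 1; 1; -3; 1; 1; -4; 4; -2]);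
       (-29, [:: -1; 0; 4; 3; -5; -3; 8; -3; -2; 1]);
       (-29, [:: 3; -6; -10; 11; 3; -9; -3; 11; -2; -3; 1]);
       (-29, [:: -12; 12; 28; -52; 4; 46; -28; -4; 8; -2]);
       (-31, [:: -6; 12; 20; -67; 39; 51; -87; 53; -3; -15; 9; -2])];
     [:: (-19, [:: 1; -1; -1; 1]); (-23, [:: 1; 0; -4; 1; 4; -1; -1]); (-23, [:: -3; 1; 2]);
       (-28, [:: 1; 0; -5; 7; 4; -6; 2]); (-29, [:: -1; 2; 1; -6; 4; -3; -3; 4; 1; -1]);
       (-29, [:: 3; -6; -4; 26; -14; -11; 20; -5; -11; 5; 2; -1]);
       (-30, [:: -3; 6; -8; 4; 12; -2; -6; -12; 7; 4; -2]);
       (-31, [:: -6; 21; -13; -37; 65; 4; -95; 62; 13; -23; 4; 1])];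
     [:: (-24, [:: -1; 2; 2; -4; -1; 2]); (-26, [:: 2; -4; -6; 12; -1; -4; 1]);
       (-27, [:: 2; 2; -7; 1; 8; -8; 2]); (-29, [:: -1; -2; 5; 3; -11; 6; 1; -1]);
       (-29, [:: 3; 0; -7; 0; 17; -18; 1; 6; -2]);
       (-30, [:: 3; -12; 2; 16; 14; -40; -2; 42; -25; -4; 8; -2]);
       (-31, [:: 3; -21; 32; 43; -134; 33; 152; -153; 29; 34; -22; 4])];
     [:: (-27, [:: 1; -2; -7; 15; 7; -21; -1; 9; 0; -1]);
       (-28, [:: 1; 1; -7; -2; 15; -7; -9; 10; 0; -2]);
       (-29, [:: -1; 2; 8; -8; -11; 21; 0; -14; 3; 3; -1]);
       (-29, [:: 3; -12; -10; 28; -3; -41; 32; 17; -22; 1; 4; -1]);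
       (-30, [:: -3; -9; 28; 3; -54; 9; 60; -15; -39; 16; 8; -4]);
       (-31, [:: -9; 21; 27; -106; 19; 168; -93; -117; 118; -3; -30; 9])];
     [:: (-28, [:: 1; -2; -5; 17; -8; -13; 12; 0; -2]);
       (-29, [:: -1; 4; -3; -9; 14; -8; 3; 7; -10; 1; 3; -1]);
       (-29, [:: 3; -6; -1; 26; -33; 1; 20; -12; 0; 3; -1]);
       (-29, [:: 3; -21; 47; -17; -61; 65; 3; -31; 10; 4; -2]);
       (-30, [:: -3; 15; -17; -23; 72; -72; 23; 17; -15; 3])];
     [:: (-29, [:: -1; 0; 5; -6; -15; 21; 3; -17; 6; 4; -2]);
       (-29, [:: 3; -6; 5; 17; -8; -26; 26; 7; -23; 6; 5; -2]);
       (-30, [:: 3; -12; 23; -8; -29; 40; -5; -24; 10; 4; -2]);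
       (-30, [:: 6; -18; 4; 54; -80; 5; 44; -16; -6; 3])];
     [:: (-29, [:: 6; -9; -11; 27; -6; -26; 24; 6; -16; 3; 3; -1]);
       (-31, [:: 3; -9; -4; 30; -20; -30; 46; 4; -31; 7; 6; -2]);
       (-32, [:: 6; -36; 67; -3; -137; 140; 32; -126; 50; 24; -19; 1; 1])];
     [:: (-31, [:: -3; 9; -8; -24; 48; 4; -60; 34; 21; -29; 4; 6; -2]);
       (-32, [:: -3; 15; -38; 46; 16; -116; 110; 18; -97; 53; 8; -16; 4])];
     [:: (-32, [:: -3; 15; -20; -20; 76; -28; -80; 62; 25; -35; 4; 6; -2])]].

(* column operations triangularising 1 - t rho(x) *)
Definition den_colops : seq (seq laurent) :=
  [:: [:: (0, [:: 1]); lzero; lzero];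
     [:: (0, [:: 1; -1]); (1, [:: 1; -1])];
     [:: (0, [:: 1; -1])]].
End CertificateData.

(* - t^-36, the unit by which the paper's formula differs from Wada's invariant,
   and the other Laurent polynomials entering the final identity *)
Definition wada_unit : laurent := (Zneg 36, [:: Zneg 1]).
Definition t_minus_1 : laurent := lpoly [:: -1; 1].
Definition DeltaK_lp : laurent := lpoly [:: 3; -11; 17; -11; 3].
Definition Fac2_lp : laurent := lpoly [:: 3; 0; -13; 0; 13; 0; -3].
Definition fox_rowdiag : laurent := ldiag 30 fox_rowops.
Definition fox_coldiag : laurent := ldiag 30 (lmx_of_upper fox_colops).
Definition den_rowdiag : laurent := ldiag 3 lmx_id.
Definition den_coldiag : laurent := ldiag 3 (lmx_of_upper den_colops).

(* Given the diagonal products y1, y2 of the two triangularised matrices: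
   everything to be divided by is nonzero, and
     y1 * a2 * u2 * (t - 1) = -t^-36 * DeltaK * Fac2 * a1 * u1 * y2. *)
Definition wada_identity (y1 y2 : laurent) : bool :=
  [&& lnz fox_rowdiag, lnz fox_coldiag, lnz den_rowdiag, lnz den_coldiag &
  [&& lnz y2, lnz t_minus_1 &
      leqb (lprod [:: y1; den_rowdiag; den_coldiag; t_minus_1])
           (lprod [:: wada_unit; DeltaK_lp; Fac2_lp; fox_rowdiag; fox_coldiag; y2])]].

(* both options are present and their contents satisfy P; as a separate
   combinator it keeps the elaborator from evaluating the certificates *)
Definition opt_check2 (o1 o2 : option laurent) (P : laurent -> laurent -> bool) : bool :=
  if o1 is Some y1 then if o2 is Some y2 then P y1 y2 else false else false.

Definition wada_check : bool :=
  opt_check2 (tri_cert 30 fox_block fox_rowops (lmx_of_upper fox_colops))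
             (tri_cert 3 den_lmx lmx_id (lmx_of_upper den_colops)) wada_identity.

Lemma wada_check_ok : wada_check.
Proof. by vm_compute. Qed.

Lemma quotient_from_certificates (K : fieldType) (d1 d2 a1 u1 y1 a2 u2 y2 w D F T : K) :
  a1 != 0 -> u1 != 0 -> a2 != 0 -> u2 != 0 -> y2 != 0 -> T != 0 ->
  d1 * (a1 * u1) = y1 -> d2 * (a2 * u2) = y2 ->
  y1 * (a2 * (u2 * T)) = w * (D * (F * (a1 * (u1 * y2)))) ->
  d1 / d2 = w * (D * F / T).
Proof.
move=> a1P u1P a2P u2P y2P TP e1 e2 e.
have d1E : d1 = y1 / (a1 * u1) by rewrite -e1 mulfK // mulf_neq0.
have d2E : d2 = y2 / (a2 * u2) by rewrite -e2 mulfK // mulf_neq0.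
have y1E : y1 = w * (D * (F * (a1 * (u1 * y2)))) / (a2 * (u2 * T)).
  by rewrite -e mulfK // !mulf_neq0.
by rewrite d1E d2E y1E; field; rewrite ?a1P ?u1P ?a2P ?u2P ?y2P ?TP.
Qed.

Lemma leval_t_minus_1 : leval tQ t_minus_1 = tQ - 1.
Proof.
rewrite leval_lpoly /= !cons_poly_def polyQD polyQM polyQX polyQD polyQC.
by rewrite polyC0 mul0r polyQ0 add0r polyQC mulr1z mulrN1z mul1r.
Qed.

Lemma wada_value : wada K_rels rep_alpha K_phi =
  (-1) ^+ true * tQ ^ (-36) * (polyQ DeltaK * polyQ Fac2 / (tQ - 1)).
Proof.
have wE : leval tQ wada_unit = (-1) ^+ true * tQ ^ (-36).
  by rewrite /leval /= /zcoef /= mulr0 addr0 mulrN1z mulrN1 expr1 mulN1r.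
rewrite -leval_t_minus_1 -wE -[polyQ DeltaK]leval_lpoly -[polyQ Fac2]leval_lpoly.
have := wada_check_ok; rewrite /wada_check /opt_check2 wada_lmx.
case E1: tri_cert => [y1|//]; case E2: tri_cert => [y2|//].
case/and5P=> a1P u1P a2P u2P /and3P [y2P TP /(leval_eq tQ_neq0)].
rewrite !(leval_prod tQ_neq0) !big_cons big_nil !mulr1 => identity.
exact: (quotient_from_certificates (lnz_neq0 a1P) (lnz_neq0 u1P) (lnz_neq0 a2P)
         (lnz_neq0 u2P) (lnz_neq0 y2P) (lnz_neq0 TP)
         (tri_certP tQ_neq0 E1) (tri_certP tQ_neq0 E2) identity).
Qed.

(* Comparing with the value of the
   invariant, Fac2 would be a unit times t^k f(t) f(-t) in Z[t, t^-1]; the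
   lowest coefficient of f(t) f(-t) is a signed square, whereas that of Fac2
   is 3. *)
Lemma three_not_signed_square (z c : int) : (c = 1 \/ c = -1) -> 3 <> c * (z * z).
Proof.
have : (z <= -2) \/ (z = -1) \/ (z = 0) \/ (z = 1) \/ (2 <= z) by lia.
by case=> [z_le|[->|[->|[->|z_ge]]]]; case=> -> //; nia.
Qed.

Lemma Fac2_not_norm n (f : {poly int}) (c : int) (b : nat) : (c = 1 \/ c = -1) ->
  Fac2 * 'X^n <> c%:P * 'X^b * (f * (f \Po - 'X)).
Proof.
have X_neq0 : ('X : {poly int}) != 0 by rewrite polyX_eq0.
elim/ltn_ind: n f c b => n IH f c b c_unit E.
have := congr1 (fun p => p.[0]) E; rewrite /= !hornerM !hornerXn hornerC.
rewrite horner_comp hornerN hornerX oppr0 horner_coef0 coef_Poly /=.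
case: n IH E => [|n] IH E.
  case: b E => [|b] E; rewrite ?expr0 ?mulr1 => three.
    exact: three_not_signed_square c_unit three.
  by move: three; rewrite exprS mul0r mulr0 mul0r; lia.
case: b E => [|b] E; last first.
  move=> _; apply: (IH n (ltnSn n) f c b c_unit); apply: (mulIf X_neq0).
  by move: E; rewrite !exprSr !mulrA => ->; ring.
rewrite exprS mul0r mulr0 expr0 mulr1 => /esym /eqP.
rewrite mulf_eq0 => /orP [/eqP c0|]; first by case: c_unit; rewrite c0.
rewrite mulf_eq0 orbb => /eqP f0.
have /factor_theorem [h fE] : root f 0 by rewrite /root f0.
apply: (IH n (ltnSn n) h (- c) 1%N).
  by case: c_unit => ->; [right | left; rewrite opprK].
apply: (mulIf X_neq0); rewrite -[Fac2 * 'X^n * 'X]mulrA -exprSr.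
by move: E; rewrite fE polyC0 subr0 comp_polyM comp_polyX => ->; rewrite polyCN expr0 expr1; ring.
Qed.

Lemma clear_denominators (K : fieldType) (t D F T f g : K) (s : bool) (k k0 : int) :
  t != 0 -> D != 0 -> T != 0 -> 1 - t = - T ->
  (-1) ^+ true * t ^ k0 * (D * F / T) = (-1) ^+ s * t ^ k * (D / (1 - t) * f * g) ->
  F = (-1) ^+ s * t ^ (k - k0) * (f * g).
Proof.
move=> tP DP TP -> E; rewrite expfzDr // -invr_expz.
have uP : t ^ k0 != 0 := expfz_neq0 _ tP.
have -> : F = (-1) ^+ true * t ^ k0 * (D * F / T) * T / ((-1) ^+ true * t ^ k0 * D).
  by rewrite expr1; field; rewrite ?oppr_eq0 ?oner_eq0 ?DP ?uP ?TP.
by rewrite E expr1; field; rewrite ?oppr_eq0 ?oner_eq0 ?DP ?uP ?TP.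
Qed.

Lemma no_factorisation : ~ (exists f : {poly int},
  eqdot (wada K_rels rep_alpha K_phi)
        (polyQ DeltaK / (1 - tQ) * polyQ f * polyQ (f \Po - 'X))).
Proof.
case=> f [s [k]]; rewrite wada_value.
have DP : polyQ DeltaK != 0 by rewrite -leval_lpoly lnz_neq0.
have TP : tQ - 1 != 0 by rewrite -leval_t_minus_1 lnz_neq0.
move/(clear_denominators tQ_neq0 DP TP (esym (opprB _ _))).
have sign_unit : ((-1) ^+ s : int) = 1 \/ ((-1) ^+ s : int) = -1.
  by case: s; [right | left].
case: (k - -36) => [b|a] Fac2E.
  apply: (@Fac2_not_norm 0 f _ b sign_unit); apply: polyQ_inj.
  by rewrite !polyQM !polyQXn polyQC expr0 mulr1 Fac2E rmorph_sign.
apply: (@Fac2_not_norm a.+1 f _ 0 sign_unit); apply: polyQ_inj.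
rewrite !polyQM !polyQXn polyQC expr0 mulr1 Fac2E rmorph_sign NegzE -invr_expz.
by rewrite mulrAC (divfK (expfz_neq0 (a.+1)%:Z tQ_neq0)).
Qed.

Theorem theorem1p2 :
  exists alpha : 'I_11 -> D3,
    (* alpha is a homomorphism pi_K -> D_3 *)
    (forall r : 'I_10, evalD alpha (K_rels r) = 1%g) /\
    (* alpha is onto *)
    (<<[set alpha g | g : 'I_11]>>%g = [set: D3]%g) /\
    eqdot (wada K_rels (fun g => rho (alpha g)) K_phi)
          (polyQ DeltaK * polyQ Fac2 / (tQ - 1)) /\
    ~ (exists f : {poly int},
         eqdot (wada K_rels (fun g => rho (alpha g)) K_phi)
               (polyQ DeltaK / (1 - tQ) * polyQ f * polyQ (f \Po - 'X))).
Proof.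
exists alpha; split; first exact: alpha_relations.
split; first exact: alpha_onto.
split; last exact: no_factorisation.
by exists true, (-36); exact: wada_value.
Qed.
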